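(* Consider a flow traversing a path $\mathbb{L}=\{1,\dots,N\}$ (a cascade) of wireless fading channels, where link $n$ has SNR-domain service process $\mathcal{S}_n(\tau,t)=\prod_{i=\tau}^{t-1} g(\gamma_{i,n})$ with stationary independent increments $g(\gamma_n)$, the links being mutually independent. The service at each node is shared by the through-flow and an independent cross-flow with SNR-domain arrival process $\mathcal{A}_c(\tau,t)=e^{k_c(t-\tau)}$ (constant rate $k_c$ bits per slot). Let $\mathcal{S}_c^{\mathbb{L}}(\tau,t)$ denote the end-to-end leftover service provided to the through-flow along $\mathbb{L}$, and $\mathcal{M}_{\mathcal{S}_c}^{\mathbb{L}}(s,\tau,t)$ its Mellin transform. Then for all $s<1$ and any $m\in\{1,\dots,N-1\}$, $$\mathcal{M}_{\mathcal{S}_c}^{\mathbb{L}}(s,\tau,t)\le \frac{\mathcal{M}_{g(\gamma_N)}(s)}{\mathcal{M}_{g(\gamma_N)}(s)-\mathcal{M}_{g(\gamma_m)}(s)}\,\mathcal{M}_{\mathcal{S}_c}^{\mathbb{L}\setminus\{m\}}(s,\tau,t)+\frac{\mathcal{M}_{g(\gamma_m)}(s)}{\mathcal{M}_{g(\gamma_m)}(s)-\mathcal{M}_{g(\gamma_N)}(s)}\,\mathcal{M}_{\mathcal{S}_c}^{\mathbb{L}\setminus\{N\}}(s,\tau,t),$$ where for a single link $\mathcal{M}_{\mathcal{S}_c}^{\{1\}}(s,\tau,t)=\left(e^{k_c(1-s)}\,\mathcal{M}_{g(\gamma_1)}(s)\right)^{t-\tau}$.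
   Context: Quantities in the SNR domain are exponentials of bit-domain quantities: if $S(\tau,t)$ is the cumulative number of bits served in slots $[\tau,t)$, then $\mathcal{S}(\tau,t)=e^{S(\tau,t)}$; the per-slot service increment is $g(\gamma)=e^{s_i}$ where $s_i$ is the bits served in slot $i$. For a nonnegative random variable $X$, the Mellin transform is $\mathcal{M}_X(s)=\mathbb{E}[X^{s-1}]$, and for a bivariate process $\mathcal{M}_{\mathcal{X}}(s,\tau,t)=\mathbb{E}[\mathcal{X}(\tau,t)^{s-1}]$. The leftover service at a single link is $\mathcal{S}(\tau,t)/\mathcal{A}_c(\tau,t)$. The end-to-end service of a path is the $(\min,\times)$ convolution of the per-link services, $\mathcal{S}_1\otimes\mathcal{S}_2(\tau,t)=\inf_{\tau\le i\le t}\{\mathcal{S}_1(\tau,i)\mathcal{S}_2(i,t)\}$, iterated over the links; the end-to-end leftover service is the analogous convolution of per-link leftover services. The through-flow arrivals, cross-traffic arrivals and link service processes are all independent. Time is slotted. *)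

From HB Require Import structures.
From mathcomp Require Import all_boot all_order all_algebra.
From mathcomp Require Import all_classical all_reals all_analysis.
Set Implicit Arguments. Unset Strict Implicit. Unset Printing Implicit Defensive.
Import Order.TTheory GRing.Theory Num.Theory.
Local Open Scope classical_set_scope.
Local Open Scope ring_scope.

Definition mutually_independent d (Omega : measurableType d) (R : realType)
  (P : probability Omega R) (I : eqType) (X : I -> Omega -> R) : Prop :=
  (forall i, measurable_fun setT (X i)) /\
  forall (J : seq I) (B : I -> set R), uniq J -> (forall i, measurable (B i)) ->
    P (\big[setI/setT]_(i <- J) (X i @^-1` B i)) =
    (\prod_(i <- J) P (X i @^-1` B i))%E.

Definition mellin d (Omega : measurableType d) (R : realType)
  (P : probability Omega R) (X : Omega -> R) (s : R) : \bar R :=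
  (\int[P]_w ((X w) `^ (s - 1))%:E)%E.

(* Per-slot service increments g(gamma_{i,n}) : slot i (nat), link n.
   SNR-domain service of link n over [tau,t):  prod_{i=tau}^{t-1} g i n. *)
Definition link_service (R : realType) (Omega : Type) (L : Type)
  (g : nat -> L -> Omega -> R) (n : L) (tau t : nat) (w : Omega) : R :=
  \prod_(tau <= i < t) g i n w.

(* Leftover service at link n with constant-rate cross traffic
   A_c(tau,t) = exp(kc (t - tau)):  S_n(tau,t) / A_c(tau,t). *)
Definition leftover_service (R : realType) (Omega : Type) (L : Type)
  (g : nat -> L -> Omega -> R) (kc : R) (n : L) (tau t : nat) (w : Omega) : R :=
  link_service g n tau t w / expR (kc * (t - tau)%:R).

Definition minx_conv (R : realType) (S1 S2 : nat -> nat -> R) (tau t : nat) : R :=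
  \big[Num.min/ S1 tau tau * S2 tau t]_(tau <= i < t.+1) (S1 tau i * S2 i t).

(* End-to-end leftover service along a (nonempty) path, links in path order:
   S_{l1} (x) (S_{l2} (x) ( ... (x) S_{lk})). The empty path is never used. *)
Fixpoint path_leftover (R : realType) (Omega : Type) (L : Type)
  (g : nat -> L -> Omega -> R) (kc : R) (p : seq L) (w : Omega)
  : nat -> nat -> R :=
  match p with
  | [::] => fun _ _ => 1
  | [:: n] => fun tau t => leftover_service g kc n tau t w
  | n :: p' => minx_conv (fun tau t => leftover_service g kc n tau t w)
                         (path_leftover g kc p' w)
  end.

(* The paper's recursively defined bound on the Mellin transform of the
   end-to-end leftover service of a path whose links have per-link values
   a_n = exp(kc(1-s)) M_{g(gamma_n)}(s): base case a^T for one link; the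
   recursion of Theorem 3 is solved by the sum over all ways of splitting
   the T = t - tau slots among the links,  sum_{l_1+...+l_k = T} prod a_j^{l_j}. *)
Fixpoint split_sum (R : realType) (a : seq R) (T : nat) : R :=
  match a with
  | [::] => (T == 0%N)%:R
  | x :: a' => \sum_(l < T.+1) x ^+ l * split_sum a' (T - l)
  end.

(* Since [x `^ (s - 1)] is multiplicative on positive reals, the power of a
   (min,x)-convolution is the power of one of its terms, hence at most the sum
   of the powers of all its terms.  Unfolding the convolution along the path,
   the Mellin transform of the end-to-end leftover service is bounded by the
   expectation of a sum, over all ways of splitting the [t - tau] slots among
   the links, of products of powers of the increments; by independence and
   stationarity each product has expectation [\prod_n a_n ^+ l_n], so the bound
   is [split_sum a (t - tau)].  This is the coefficient of [X ^+ (t - tau)] in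
   [\prod_n 1 / (1 - a_n X)], and the partial fraction identity
   [(a_N - a_m) / ((1 - a_m X) (1 - a_N X)) = a_N / (1 - a_N X) - a_m / (1 - a_m X)]
   splits it along the two paths without link [m] and without link [N]. *)

From HB Require Import structures.
From mathcomp Require Import all_boot all_order all_algebra.
From mathcomp Require Import all_classical all_reals all_analysis.
From mathcomp Require Import ring zify.
Import measurable_realfun.
Set Implicit Arguments.
Unset Strict Implicit.
Unset Printing Implicit Defensive.
Import Order.TTheory GRing.Theory Num.Theory.
Local Open Scope classical_set_scope.
Local Open Scope ring_scope.

Section integral_factorization.
Context d (Omega : measurableType d) (R : realType) (P : probability Omega R).
Local Open Scope ereal_scope.
Import HBNNSimple.

Lemma integral_nnsfun_comp_mul (f : {nnsfun R >-> R}) (X W : Omega -> R) :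
  measurable_fun setT X -> measurable_fun setT W -> (forall w, (0 <= W w)%R) ->
  \int[P]_w (f (X w) * W w)%:E =
  \sum_(r <- finmap.enum_fset (fset_set (range f)))
     r%:E * \int[P]_w (\1_(f @^-1` [set r]) (X w) * W w)%:E.
Proof.
move=> mX mW W0.
have mIX r : measurable_fun setT (fun w => \1_(f @^-1` [set r]) (X w) : R).
  by apply: (measurableT_comp _ mX); exact: measurable_indic.
under eq_integral => w _.
  rewrite fimfunE fsbig_finite ?fimfunP // big_distrl /= -sumEFin.
over.
rewrite ge0_integral_sum //; last first.
- move=> r w _; rewrite lee_fin; apply: mulr_ge0 => //.
  exact: nnfun_muleindic_ge0.
- move=> r; apply/measurable_EFinP.
  by apply: measurable_funM => //; apply: measurable_funM.
rewrite big_seq [RHS]big_seq; apply: eq_bigr => r.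
rewrite in_fset_set ?fimfunP // inE => -[x _ <-].
rewrite -ge0_integralZl_EFin //; last first.
- by apply/measurable_EFinP; apply: measurable_funM.
- by move=> w _; rewrite lee_fin mulr_ge0 // indicE.
by apply: eq_integral => w _; rewrite -EFinM mulrA.
Qed.

Lemma cvg_monotone_convergence_real (F : nat -> Omega -> R) (G : Omega -> R) :
  (forall k, measurable_fun setT (F k)) -> (forall k w, (0 <= F k w)%R) ->
  (forall w, {homo F ^~ w : m n / (m <= n)%N >-> (m <= n)%R}) ->
  (forall w, (F k w)%:E @[k --> \oo] --> (G w)%:E) ->
  \int[P]_w (F k w)%:E @[k --> \oo] --> \int[P]_w (G w)%:E.
Proof.
move=> mF F0 ndF cvF.
have -> : \int[P]_w (G w)%:E = \int[P]_w limn (fun k => (F k w)%:E).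
  by apply: eq_integral => w _; apply/esym/cvg_lim.
apply: cvg_monotone_convergence => //.
- by move=> k; exact/measurable_EFinP.
- by move=> k w _; rewrite lee_fin.
- by move=> w _ m n mn; rewrite lee_fin; apply: ndF.
Qed.

(* Checked on indicators, the factorization extends to simple functions by
   linearity and to all nonnegative measurable [h] by monotone convergence. *)
Lemma integral_comp_mul_of_indic (X Z : Omega -> R) (c : R) :
  measurable_fun setT X -> measurable_fun setT Z -> (forall w, (0 <= Z w)%R) ->
  \int[P]_w (Z w)%:E = c%:E ->
  (forall B, measurable B ->
     \int[P]_w (\1_B (X w) * Z w)%:E = P (X @^-1` B) * c%:E) ->
  forall h : R -> R, measurable_fun setT h -> (forall x, (0 <= h x)%R) ->
  \int[P]_w (h (X w) * Z w)%:E = \int[P]_w (h (X w))%:E * c%:E.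
Proof.
move=> mX mZ Z0 intZ intIZ h mh h0.
have mh' : measurable_fun setT (EFin \o h) by apply/measurable_EFinP.
pose f_ := nnsfun_approx measurableT mh'.
have cvf x : (f_ k x)%:E @[k --> \oo] --> (h x)%:E.
  exact: (cvg_nnsfun_approx measurableT mh' (fun x _ => h0 x) I).
have ndf x : {homo f_ ^~ x : m n / (m <= n)%N >-> (m <= n)%R}.
  by move=> m n mn; exact/lefP/nd_nnsfun_approx.
have mfX k : measurable_fun setT (fun w => f_ k (X w)) by exact: measurableT_comp.
have simple_case k :
    \int[P]_w (f_ k (X w) * Z w)%:E = \int[P]_w (f_ k (X w))%:E * c%:E.
  transitivity (\int[P]_w (f_ k (X w) * cst 1%R w)%:E * c%:E); last first.
    by congr (_ * _); apply: eq_integral => w _; rewrite /= mulr1.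
  rewrite !integral_nnsfun_comp_mul //; try exact: measurable_cst.
  rewrite [in RHS]big_seq ge0_sume_distrl; last first.
    move=> r; rewrite in_fset_set ?fimfunP // inE => -[x _ <-].
    apply: mule_ge0; first by rewrite lee_fin.
    by apply: integral_ge0 => w _; rewrite lee_fin /= mulr1.
  rewrite [in LHS]big_seq; apply: eq_bigr => r _; rewrite -muleA.
  have mpre : measurable (f_ k @^-1` [set r]).
    by rewrite -[_ @^-1` _]setTI; apply: measurable_funP1.
  rewrite intIZ //; congr (_ * (_ * _)); apply/esym.
  transitivity (\int[P]_w (\1_(X @^-1` (f_ k @^-1` [set r])) w)%:E).
    by apply: eq_integral => w _; rewrite /= mulr1 !indicE.
  by rewrite integral_indic ?setIT //; rewrite -[X @^-1` _]setTI; apply: mX.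
have cvfZ : \int[P]_w (f_ k (X w) * Z w)%:E @[k --> \oo] -->
            \int[P]_w (h (X w) * Z w)%:E.
  apply: cvg_monotone_convergence_real.
  - by move=> k; apply: measurable_funM.
  - by move=> k w; apply: mulr_ge0.
  - by move=> w m n mn; apply: ler_wpM2r => //; apply: ndf.
  - move=> w; under eq_fun do rewrite EFinM.
    by rewrite EFinM; apply: cvgeZr => //; exact: cvf.
have cvfX : \int[P]_w (f_ k (X w))%:E @[k --> \oo] --> \int[P]_w (h (X w))%:E.
  by apply: cvg_monotone_convergence_real => // w m n mn; apply: ndf.
rewrite -(cvg_lim _ cvfZ) //; under eq_fun do rewrite simple_case.
by rewrite limeMr ?(cvg_lim _ cvfX) //; apply/cvg_ex; eexists; exact: cvfX.
Qed.

End integral_factorization.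

Section independent_product.
Context d (Omega : measurableType d) (R : realType) (P : probability Omega R).
Context (I : eqType) (X : I -> Omega -> R) (F : I -> R -> R).
Hypothesis indepX : mutually_independent P X.
Hypothesis mF : forall i, measurable_fun setT (F i).
Hypothesis F_ge0 : forall i x, 0 <= F i x.
Hypothesis F_fin : forall i, (\int[P]_w (F i (X i w))%:E)%E \is a fin_num.
Local Open Scope ereal_scope.

Let mX i : measurable_fun setT (X i). Proof. by case: indepX. Qed.

Let mXB i B : measurable B -> measurable (X i @^-1` B).
Proof. by move=> mB; rewrite -[_ @^-1` _]setTI; apply: mX. Qed.

Let mprod (J K : seq I) (B : I -> set R) : (forall i, measurable (B i)) ->
  measurable_fun setT
    (fun w => \prod_(j <- J) F j (X j w) * \prod_(k <- K) \1_(B k) (X k w))%R.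
Proof.
move=> mB; apply: measurable_funM; apply: measurable_prod => i _.
  exact: measurableT_comp.
by apply: measurableT_comp (mX i); exact: measurable_indic.
Qed.

Let prod_ge0 (J K : seq I) (B : I -> set R) w :
  (0 <= \prod_(j <- J) F j (X j w) * \prod_(k <- K) \1_(B k) (X k w))%R.
Proof. by rewrite mulr_ge0 // prodr_ge0 // => i _; rewrite indicE. Qed.

(* Only indicators are covered by the definition of independence; the
   induction turns the factors [F j] one at a time into such indicators with
   [integral_comp_mul_of_indic]. *)
Lemma integral_prod_mul_indic (J K : seq I) (B : I -> set R) :
  uniq (J ++ K) -> (forall i, measurable (B i)) ->
  \int[P]_w (\prod_(j <- J) F j (X j w) * \prod_(k <- K) \1_(B k) (X k w))%:E =
  \prod_(j <- J) \int[P]_w (F j (X j w))%:E * \prod_(k <- K) P (X k @^-1` B k).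
Proof.
elim: J K B => [|j J IH] K B /= uJK mB.
  under eq_integral do rewrite big_nil mul1r.
  rewrite big_nil mul1e.
  have prod_indic w : (\prod_(k <- K) \1_(B k) (X k w) =
               \1_(\big[setI/setT]_(k <- K) X k @^-1` B k) w :> R)%R.
    elim: K {uJK} => [|k K IHK]; first by rewrite !big_nil indicT.
    by rewrite !big_cons IHK indicI /= [in RHS]indicE [in LHS]indicE.
  under eq_integral do rewrite prod_indic.
  have [_ indep] := indepX.
  rewrite integral_indic ?setIT //; first exact: indep.
  apply: (big_ind (fun A => measurable A)) => //; first exact: measurableI.
  by move=> k _; exact: mXB.
move: uJK => /andP[jJK uJK].
have jK : j \notin K by apply: contra jJK; rewrite mem_cat orbC => ->.
have uJjK : uniq (J ++ j :: K).
  have pJjK : perm_eq (J ++ [:: j] ++ K) ([:: j] ++ J ++ K) by rewrite perm_catCA.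
  by rewrite (perm_uniq pJjK) /= jJK.
set c := \prod_(j <- J) \int[P]_w (F j (X j w))%:E * \prod_(k <- K) P (X k @^-1` B k).
have c_fin : c \is a fin_num.
  rewrite fin_numM //; apply: prode_fin_num => // k _.
  by apply: fin_num_measure; exact: mXB.
under eq_integral do rewrite big_cons -mulrA.
rewrite big_cons -muleA -/c -(fineK c_fin).
apply: integral_comp_mul_of_indic => //; first exact: mprod.
- by rewrite fineK // IH.
- move=> B0 mB0; pose B' i := if i == j then B0 else B i.
  have mB' i : measurable (B' i) by rewrite /B'; case: ifP.
  have B'j : B' j = B0 by rewrite /B' eqxx.
  have B'K : {in K, B' =1 B}.
    by move=> k kK; rewrite /B' ifN //; apply: contraNneq jK => <-.
  have B'K_indic w : (\prod_(k <- K) \1_(B' k) (X k w) =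
                      \prod_(k <- K) \1_(B k) (X k w) :> R)%R.
    by apply: eq_big_seq => k /B'K ->.
  have B'K_P : \prod_(k <- K) P (X k @^-1` B' k) = \prod_(k <- K) P (X k @^-1` B k).
    by apply: eq_big_seq => k /B'K ->.
  have := IH (j :: K) B' uJjK mB'.
  under eq_integral do rewrite big_cons B'j B'K_indic.
  rewrite big_cons B'j B'K_P fineK // muleCA => <-.
  by apply: eq_integral => w _; rewrite mulrCA.
Qed.

Lemma integral_prod_indep (J : seq I) : uniq J ->
  \int[P]_w (\prod_(j <- J) F j (X j w))%:E = \prod_(j <- J) \int[P]_w (F j (X j w))%:E.
Proof.
move=> uJ; have := @integral_prod_mul_indic J [::] (fun=> setT).
rewrite cats0 big_nil mule1 => <- //.
by apply: eq_integral => w _; rewrite big_nil mulr1.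
Qed.

End independent_product.

Lemma ge0_integral_comp_eq_law d (Omega : measurableType d) (R : realType)
  (P : probability Omega R) (X Y : Omega -> R) (f : R -> \bar R) :
  measurable_fun setT X -> measurable_fun setT Y ->
  (forall B, measurable B -> P (X @^-1` B) = P (Y @^-1` B)) ->
  measurable_fun setT f -> (forall x, (0 <= f x)%E) ->
  (\int[P]_w f (X w) = \int[P]_w f (Y w))%E.
Proof.
move=> mX mY XY mf f0.
have f0' : {in setT, forall x, (0 <= f x)%E} by move=> x _; exact: f0.
have := ge0_integral_pushforward mX P measurableT mf f0'.
have := ge0_integral_pushforward mY P measurableT mf f0'.
rewrite !preimage_setT => <- <-.
by apply: eq_measure_integral => B mB _; exact: XY.
Qed.

Lemma ge0_integralZl_real d (Omega : measurableType d) (R : realType)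
  (mu : measure Omega R) (c : R) (f : Omega -> R) :
  measurable_fun setT f -> (forall w, 0 <= f w) -> 0 <= c ->
  (\int[mu]_w (c * f w)%:E = c%:E * \int[mu]_w (f w)%:E)%E.
Proof.
move=> mf f0 c0; under eq_integral do rewrite EFinM.
by rewrite ge0_integralZl_EFin //; [move=> w _; rewrite lee_fin | exact/measurable_EFinP].
Qed.

Lemma measurable_bigmin d (Omega : measurableType d) (R : realType)
  (r : seq nat) (F : nat -> Omega -> R) (x0 : Omega -> R) :
  measurable_fun setT x0 -> (forall i, measurable_fun setT (F i)) ->
  measurable_fun setT (fun w => \big[Num.min/x0 w]_(i <- r) F i w).
Proof.
move=> mx0 mF; elim: r => [|i r IH]; first by under eq_fun do rewrite big_nil.
by under eq_fun do rewrite big_cons; exact: measurable_minr.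
Qed.

Lemma powR_prod (R : realType) (I : Type) (r : seq I) (F : I -> R) (x : R) :
  (forall i, 0 <= F i) -> (\prod_(i <- r) F i) `^ x = \prod_(i <- r) F i `^ x.
Proof.
move=> F0; elim: r => [|i r IH]; first by rewrite !big_nil powR1.
by rewrite !big_cons powRM ?IH ?prodr_ge0.
Qed.

Section split_sum.
Context (R : realType).

Lemma split_sum1 (x : R) T : split_sum [:: x] T = x ^+ T.
Proof.
rewrite /= big_ord_recr big1 /= ?subnn ?mulr1 ?add0r // => k _.
suff /negbTE -> : (T - k != 0)%N by rewrite mulr0.
by rewrite subn_eq0 -ltnNge.
Qed.

Lemma split_sum_coef_prod (a : seq R) M T : (T < M)%N ->
  split_sum a T = (\prod_(x <- a) \poly_(i < M) (x ^+ i))`_T.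
Proof.
elim: a T => [|x a IH] T lt_T_M /=; first by rewrite big_nil coef1.
rewrite big_cons coefM; apply: eq_bigr => i _.
rewrite coef_poly IH; last exact: leq_ltn_trans (leq_subr _ _) lt_T_M.
by rewrite (leq_ltn_trans _ lt_T_M) // -ltnS.
Qed.

Lemma coefM_eq_low (p q1 q2 : {poly R}) T :
  (forall j, (j <= T)%N -> q1`_j = q2`_j) -> (p * q1)`_T = (p * q2)`_T.
Proof. by move=> q12; rewrite !coefM; apply: eq_bigr => j _; rewrite q12 ?leq_subr. Qed.

(* Truncated form of [(y - x) / ((1 - x X) (1 - y X)) = y / (1 - y X) - x / (1 - x X)]. *)
Lemma coef_geometric_partial_fraction (x y : R) M j : (j < M)%N ->
  ((y - x) *: (\poly_(i < M) x ^+ i * \poly_(i < M) y ^+ i))`_j =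
  (y *: \poly_(i < M) y ^+ i - x *: \poly_(i < M) x ^+ i)`_j.
Proof.
move=> lt_j_M; rewrite coefZ coefB !coefZ coefM !coef_poly lt_j_M.
rewrite -(exprS y) -(exprS x) subrXX; congr (_ * _); apply: eq_bigr => k _.
have lt_k_M : (k < M)%N by apply: leq_ltn_trans lt_j_M; rewrite -ltnS.
by rewrite !coef_poly lt_k_M (leq_ltn_trans (leq_subr _ _) lt_j_M) mulrC.
Qed.

Lemma split_sum_partial_fraction (I : finType) (a : I -> R) (m N : I) T : m != N ->
  (a N - a m) * split_sum (map a (enum I)) T =
  a N * split_sum (map a [seq l <- enum I | l != m]) T -
  a m * split_sum (map a [seq l <- enum I | l != N]) T.
Proof.
move=> mN; pose Q l := \poly_(i < T.+1) a l ^+ i.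
have split_sum_filter (p : pred I) :
    split_sum (map a [seq l <- enum I | p l]) T = (\prod_(l | p l) Q l)`_T.
  by rewrite (split_sum_coef_prod _ (ltnSn T)) big_map big_filter big_enum_cond.
have split_sum_all : split_sum (map a (enum I)) T = (\prod_(l | predT l) Q l)`_T.
  by rewrite -split_sum_filter filter_predT.
rewrite split_sum_all !split_sum_filter.
set rest := \prod_(l | (l != m) && (l != N)) Q l.
have -> : \prod_(l | predT l) Q l = rest * (Q m * Q N).
  rewrite (bigD1 m) // (bigD1 N) /=; last by rewrite eq_sym.
  by rewrite mulrA mulrC.
have -> : \prod_(l | l != m) Q l = rest * Q N.
  by rewrite (bigD1 N) 1?eq_sym //= mulrC.
have -> : \prod_(l | l != N) Q l = rest * Q m.
  by rewrite (bigD1 m) //= mulrC; congr (_ * _); apply: eq_bigl => l; rewrite andbC.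
have geo j : (j <= T)%N ->
    ((a N - a m) *: (Q m * Q N))`_j = (a N *: Q N - a m *: Q m)`_j.
  by move=> le_j_T; apply: coef_geometric_partial_fraction; rewrite ltnS.
by rewrite -coefZ scalerAr (coefM_eq_low _ geo) mulrBr coefB -!scalerAr !coefZ.
Qed.

Lemma split_sum_scaled_partial_fraction (I : finType) (e : R) (M : I -> R) (m N : I) T :
  e != 0 -> M m != M N ->
  split_sum (map (fun l => e * M l) (enum I)) T =
  M N / (M N - M m) * split_sum (map (fun l => e * M l) [seq l <- enum I | l != m]) T +
  M m / (M m - M N) * split_sum (map (fun l => e * M l) [seq l <- enum I | l != N]) T.
Proof.
move=> e0 MmN; have mN : m != N by apply: contraNneq MmN => ->.
have := split_sum_partial_fraction (fun l => e * M l) T mN.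
set H := split_sum _ T; set X := split_sum _ T; set Y := split_sum _ T => HXY.
have dNm : M N - M m != 0 by rewrite subr_eq0 eq_sym.
have dmN : M m - M N != 0 by rewrite subr_eq0.
apply: (mulfI (mulf_neq0 e0 dNm)).
transitivity (e * M N * X - e * M m * Y); first by rewrite -HXY; ring.
by field; rewrite dNm dmN.
Qed.

End split_sum.

Section path_leftover.
Context d (Omega : measurableType d) (R : realType) (P : probability Omega R).
Context (L : eqType) (g : nat -> L -> Omega -> R) (kc s : R).
Hypothesis g_gt0 : forall i l w, 0 < g i l w.

Lemma leftover_service_gt0 l tau t w : 0 < leftover_service g kc l tau t w.
Proof. by rewrite divr_gt0 ?expR_gt0 // prodr_gt0 // => i _; exact: g_gt0. Qed.

Lemma path_leftover_gt0 p tau t w : 0 < path_leftover g kc p w tau t.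
Proof.
elim: p tau t => [|l [|l' p] IH] tau t /=; first exact: ltr01.
  exact: leftover_service_gt0.
apply: (big_ind (fun v => 0 < v)); last 2 first.
- by move=> x y x0 y0; rewrite lt_min x0 y0.
- by move=> i _; rewrite mulr_gt0 ?leftover_service_gt0 ?IH.
by rewrite mulr_gt0 ?leftover_service_gt0 ?IH.
Qed.

Lemma powR_leftover_service l tau k w :
  leftover_service g kc l tau (tau + k) w `^ (s - 1) =
  expR (kc * (1 - s)) ^+ k * \prod_(tau <= i < tau + k) g i l w `^ (s - 1).
Proof.
rewrite /leftover_service /link_service addKn.
rewrite powRM ?prodr_ge0 ?invr_ge0 ?expR_ge0 //; last by move=> i _; exact/ltW.
rewrite powR_prod; last by move=> i; exact/ltW.
rewrite mulrC -expRN -expRM -expRM_natl; congr (expR _ * _).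
by ring.
Qed.

(* Pathwise counterpart of [split_sum]: [k] slots of [[tau, t)] go to the head
   link, the rest recursively to the tail of the path. *)
Fixpoint split_leftover_pow (p : seq L) (tau t : nat) (w : Omega) : R :=
  match p with
  | [::] => (tau == t)%:R
  | l :: p' => \sum_(k < (t - tau).+1)
      leftover_service g kc l tau (tau + k) w `^ (s - 1) *
      split_leftover_pow p' (tau + k) t w
  end.

Lemma split_leftover_pow_cons l p tau t w :
  split_leftover_pow (l :: p) tau t w = \sum_(k < (t - tau).+1)
    leftover_service g kc l tau (tau + k) w `^ (s - 1) *
    split_leftover_pow p (tau + k) t w.
Proof. by []. Qed.

Lemma split_leftover_pow_ge0 p tau t w : 0 <= split_leftover_pow p tau t w.
Proof.
elim: p tau => [|l p IH] tau /=; first exact: ler0n.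
by apply: sumr_ge0 => k _; rewrite mulr_ge0 ?powR_ge0.
Qed.

Lemma split_leftover_pow1 l tau t w : (tau <= t)%N ->
  split_leftover_pow [:: l] tau t w = leftover_service g kc l tau t w `^ (s - 1).
Proof.
move=> le_tau_t; rewrite /= big_ord_recr big1 /= ?add0r.
  by rewrite subnKC // eqxx mulr1.
move=> k _; suff /negbTE -> : tau + k != t by rewrite mulr0.
by apply/eqP; have := ltn_ord k; lia.
Qed.

(* No sign condition on [s - 1] is needed: the power of a minimum is the power
   of one of its terms. *)
Lemma powR_path_leftover_le p tau t w : p != [::] -> (tau <= t)%N ->
  path_leftover g kc p w tau t `^ (s - 1) <= split_leftover_pow p tau t w.
Proof.
elim: p tau => [//|l p IH] tau _ le_tau_t.
case: p IH => [|l' p] IH; first by rewrite split_leftover_pow1.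
have term_le i : (tau <= i <= t)%N ->
    (leftover_service g kc l tau i w * path_leftover g kc (l' :: p) w i t) `^ (s - 1)
    <= split_leftover_pow [:: l, l' & p] tau t w.
  move=> /andP[le_tau_i le_i_t]; have lt_i : (i - tau < (t - tau).+1)%N by lia.
  have tau_i : (tau + Ordinal lt_i)%N = i by rewrite /= subnKC.
  rewrite split_leftover_pow_cons (bigD1 (Ordinal lt_i)) // tau_i -[leLHS]addr0.
  apply: lerD; last first.
    by apply: sumr_ge0 => k _; rewrite mulr_ge0 ?powR_ge0 ?split_leftover_pow_ge0.
  rewrite powRM; first by apply: ler_wpM2l; [exact: powR_ge0 | exact: IH].
    exact/ltW/leftover_service_gt0.
  exact/ltW/path_leftover_gt0.
move: term_le; set RHS := split_leftover_pow _ _ _ _ => term_le.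
rewrite /= /minx_conv big_seq.
apply: (big_ind (fun v => v `^ (s - 1) <= _)); first by rewrite term_le ?leqnn.
- by move=> x y x_le y_le; rewrite minEle; case: ifP.
- by move=> i; rewrite mem_index_iota ltnS => /term_le.
Qed.

Hypothesis g_indep : mutually_independent P (fun il : nat * L => g il.1 il.2).
Variable Mg : L -> R.
Hypothesis mellin_g : forall i l, mellin P (g i l) s = (Mg l)%:E.

Let a l := expR (kc * (1 - s)) * Mg l.

Let mg i l : measurable_fun setT (g i l).
Proof. by case: g_indep => mg _; exact: (mg (i, l)). Qed.

Let mpowR : measurable_fun setT (fun x : R => x `^ (s - 1)).
Proof. exact: measurable_powR. Qed.

Lemma measurable_leftover_service l tau t :
  measurable_fun setT (leftover_service g kc l tau t).
Proof.
by apply: measurable_funM => //; apply: measurable_prod => i _; exact: mg.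
Qed.

Lemma measurable_path_leftover p tau t :
  measurable_fun setT (fun w => path_leftover g kc p w tau t).
Proof.
elim: p tau t => [|l [|l' p] IH] tau t /=; first exact: measurable_cst.
  exact: measurable_leftover_service.
apply: measurable_bigmin => [|i]; apply: measurable_funM => //;
  exact: measurable_leftover_service.
Qed.

Lemma measurable_split_leftover_pow p tau t :
  measurable_fun setT (fun w => split_leftover_pow p tau t w).
Proof.
elim: p tau => [|l p IH] tau /=; first exact: measurable_cst.
apply: measurable_sum => k; apply: measurable_funM => //.
exact: measurableT_comp mpowR (measurable_leftover_service _ _ _).
Qed.

Let measurable_prod_powR (K : seq (nat * L)) :
  measurable_fun setT (fun w => \prod_(k <- K) g k.1 k.2 w `^ (s - 1)).
Proof. by apply: measurable_prod => k _; exact: measurableT_comp mpowR _. Qed.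

Let prod_powR_ge0 (K : seq (nat * L)) w : 0 <= \prod_(k <- K) g k.1 k.2 w `^ (s - 1).
Proof. by apply: prodr_ge0 => k _; exact: powR_ge0. Qed.

Let integral_prod_powR (K : seq (nat * L)) : uniq K ->
  (\int[P]_w (\prod_(k <- K) g k.1 k.2 w `^ (s - 1))%:E)%E = (\prod_(k <- K) Mg k.2)%:E.
Proof.
move=> uK; rewrite (@integral_prod_indep _ _ _ P _ _ (fun _ x => x `^ (s - 1))
  g_indep (fun=> mpowR) (fun _ x => powR_ge0 x _)) //.
  by rewrite -prodEFin; apply: eq_bigr => k _; exact: mellin_g.
by move=> k; rewrite [X in X \is a fin_num]mellin_g.
Qed.

(* [K] collects the (slot, link) increments already extracted from the head
   links; they are independent of those of the links still in [p]. *)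
Lemma integral_split_leftover_pow p (K : seq (nat * L)) tau t :
  uniq p -> uniq K -> {in K, forall k, k.2 \notin p} -> (tau <= t)%N ->
  (\int[P]_w ((\prod_(k <- K) g k.1 k.2 w `^ (s - 1)) *
              split_leftover_pow p tau t w)%:E)%E =
  ((\prod_(k <- K) Mg k.2) * split_sum (map a p) (t - tau))%:E.
Proof.
elim: p K tau => [|l p IH] K tau /= up uK Kp le_tau_t.
  under eq_integral do rewrite mulrC.
  rewrite ge0_integralZl_real ?integral_prod_powR // -EFinM mulrC.
  by rewrite subn_eq0 eqn_leq le_tau_t.
move: up => /andP[lp up].
have Kp' : {in K, forall k, k.2 \notin p}.
  by move=> k /Kp; rewrite in_cons negb_or => /andP[].
have Kl : {in K, forall k, k.2 != l}.
  by move=> k /Kp; rewrite in_cons negb_or => /andP[].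
under eq_integral do rewrite mulr_sumr -sumEFin.
rewrite ge0_integral_sum //; last 2 first.
- move=> k; apply/measurable_EFinP; apply: measurable_funM => //.
  apply: measurable_funM; last exact: measurable_split_leftover_pow.
  exact: measurableT_comp mpowR (measurable_leftover_service _ _ _).
- move=> k w _; rewrite lee_fin mulr_ge0 //.
  by rewrite mulr_ge0 ?powR_ge0 ?split_leftover_pow_ge0.
rewrite mulr_sumr -sumEFin; apply: eq_bigr => k _.
have le_k_t : (tau + k <= t)%N by have := ltn_ord k; lia.
pose K' := K ++ [seq (i, l) | i <- index_iota tau (tau + k)].
have uK' : uniq K'.
  rewrite cat_uniq uK map_inj_uniq ?iota_uniq ?andbT; last by move=> i j [].
  by apply/hasPn => _ /mapP[i _ ->]; apply/negP => /Kl; rewrite eqxx.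
have K'p : {in K', forall k, k.2 \notin p}.
  by move=> k0; rewrite mem_cat => /orP[/Kp' // | /mapP[i _ ->]].
have absorb w : (\prod_(k0 <- K) g k0.1 k0.2 w `^ (s - 1)) *
     (leftover_service g kc l tau (tau + k) w `^ (s - 1) *
      split_leftover_pow p (tau + k) t w) =
   expR (kc * (1 - s)) ^+ k *
     ((\prod_(k0 <- K') g k0.1 k0.2 w `^ (s - 1)) * split_leftover_pow p (tau + k) t w).
  rewrite powR_leftover_service /K' big_cat big_map.
  by rewrite !mulrA [X in X * _ * _]mulrC -!mulrA.
under eq_integral do rewrite absorb.
rewrite ge0_integralZl_real ?exprn_ge0 ?expR_ge0 //; last 2 first.
- by apply: measurable_funM => //; exact: measurable_split_leftover_pow.
- by move=> w; rewrite mulr_ge0 ?split_leftover_pow_ge0.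
rewrite IH // -EFinM /K' big_cat big_map /= -/(index_iota tau (tau + k)).
rewrite prodr_const_nat addKn subnDA.
by rewrite /a exprMn; congr EFin; ring.
Qed.

Lemma mellin_leftover_service l tau t : (tau <= t)%N ->
  mellin P (leftover_service g kc l tau t) s = (a l ^+ (t - tau))%:E.
Proof.
move=> le_tau_t.
have nilK : {in [::], forall k : nat * L, k.2 \notin [:: l]} by [].
have := @integral_split_leftover_pow [:: l] [::] tau t isT isT nilK le_tau_t.
rewrite big_nil mul1r split_sum1 => <-.
by apply: eq_integral => w _; rewrite big_nil mul1r split_leftover_pow1.
Qed.

Lemma mellin_path_leftover_le p tau t : p != [::] -> uniq p -> (tau <= t)%N ->
  (mellin P (fun w => path_leftover g kc p w tau t) s <=
   (split_sum (map a p) (t - tau))%:E)%E.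
Proof.
move=> p0 up le_tau_t.
have nilK : {in [::], forall k : nat * L, k.2 \notin p} by [].
have := @integral_split_leftover_pow p [::] tau t up isT nilK le_tau_t.
rewrite big_nil mul1r => <-.
apply: ge0_le_integral => //.
- by move=> w _; rewrite lee_fin powR_ge0.
- by apply/measurable_EFinP; exact: measurableT_comp mpowR (measurable_path_leftover _ _ _).
- apply/measurable_EFinP; under eq_fun do rewrite big_nil mul1r.
  exact: measurable_split_leftover_pow.
- by move=> w _; rewrite big_nil mul1r lee_fin powR_path_leftover_le.
Qed.

End path_leftover.

Theorem theorem3 (d : measure_display) (Omega : measurableType d) (R : realType)
  (P : probability Omega R) (n : nat) (g : nat -> 'I_n.+1 -> Omega -> R)
  (kc s : R) (tau t : nat) (m : 'I_n.+1) :
  mutually_independent P (fun il : nat * 'I_n.+1 => g il.1 il.2) ->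
  (forall i l w, 0 < g i l w) ->
  (forall i l (B : set R), measurable B ->
     P (g i l @^-1` B) = P (g 0%N l @^-1` B)) ->
  (forall l, P.-integrable setT (fun w => ((g 0%N l w) `^ (s - 1))%:E)) ->
  0 <= kc -> s < 1 -> (tau <= t)%N -> m != ord_max ->
  let Mg l := fine (mellin P (g 0%N l) s) in
  Mg m != Mg ord_max ->
  let a l := expR (kc * (1 - s)) * Mg l in
  let L := enum 'I_n.+1 in
  (forall l, mellin P (leftover_service g kc l tau t) s = ((a l) ^+ (t - tau))%:E)
  /\
  (mellin P (fun w => path_leftover g kc L w tau t) s <=
    (Mg ord_max / (Mg ord_max - Mg m)
       * split_sum (map a [seq l <- L | l != m]) (t - tau)
     + Mg m / (Mg m - Mg ord_max)
       * split_sum (map a [seq l <- L | l != ord_max]) (t - tau))%:E)%E.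
Proof.
move=> g_indep g_gt0 g_law g_int _ _ le_tau_t _ Mg MmN a L.
have mg i l : measurable_fun setT (g i l) by case: g_indep => mg _; exact: (mg (i, l)).
have mellin_g i l : mellin P (g i l) s = (Mg l)%:E.
  rewrite /Mg fineK; last exact: integrable_fin_num (g_int l).
  apply: (@ge0_integral_comp_eq_law _ _ _ P _ _ (fun x => (x `^ (s - 1))%:E)) => //.
  - exact: g_law.
  - by apply/measurable_EFinP; exact: measurable_powR.
  - by move=> x; rewrite lee_fin powR_ge0.
split=> [l|]; first exact: mellin_leftover_service.
apply: le_trans (mellin_path_leftover_le kc g_gt0 g_indep mellin_g _ _ le_tau_t) _.
- by rewrite -size_eq0 size_enum_ord.
- exact: enum_uniq.
by rewrite lee_fin (split_sum_scaled_partial_fraction _ (lt0r_neq0 (expR_gt0 _)) MmN).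
Qed.
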